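(* For every sufficiently large natural number $n$, every natural number $\alpha$, and every $u \in \{0,1\}^n$ with $C(u) \geq \alpha + 12 \log n$, \[ \frac{1}{2n^{12}}\, 2^{n-\alpha} \leq d_\alpha (u) \leq n^5 \cdot 2^{n-\alpha}, \] where $d_\alpha(u) = |\{x \in \{0,1\}^n \mid C(u) - C(u \mid x) \geq \alpha\}|$.
   Context: $C(x)$ denotes the plain Kolmogorov complexity of the binary string $x$ with respect to a fixed universal Turing machine; $C(x \mid y)$ denotes the conditional plain Kolmogorov complexity of $x$ given $y$ with respect to a fixed universal conditional machine. Logarithms are base $2$. *)

From Stdlib Require Import Reals ZArith ClassicalEpsilon.
From mathcomp Require Import all_boot.

Set Implicit Arguments.
Unset Strict Implicit.
Unset Printing Implicit Defensive.

(* A model of computation: unary partial recursive functions on nat,  *)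
(* with pairing (a standard Turing-complete basis).                   *)

Definition npair (a b : nat) : nat := (2 ^ a * (2 * b + 1)).-1.

Inductive prog : Type :=
| PZero : prog
| PSucc : prog
| PId   : prog
| PFst  : prog
| PSnd  : prog
| PComp : prog -> prog -> prog
| PPair : prog -> prog -> prog
| PRec  : prog -> prog -> prog
| PMin  : prog -> prog.

Inductive eval : prog -> nat -> nat -> Prop :=
| ev_zero x : eval PZero x 0
| ev_succ x : eval PSucc x x.+1
| ev_id x : eval PId x x
| ev_fst a b : eval PFst (npair a b) a
| ev_snd a b : eval PSnd (npair a b) b
| ev_comp f g x y z : eval g x y -> eval f y z -> eval (PComp f g) x z
| ev_pair f g x a b : eval f x a -> eval g x b -> eval (PPair f g) x (npair a b)
| ev_rec0 f g x v : eval f x v -> eval (PRec f g) (npair x 0) v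
| ev_recS f g x n w v :
    eval (PRec f g) (npair x n) w -> eval g (npair x (npair n w)) v ->
    eval (PRec f g) (npair x n.+1) v
| ev_min f x n :
    eval f (npair x n) 0 ->
    (forall m, m < n -> exists k, eval f (npair x m) k.+1) ->
    eval (PMin f) x n.

(* Bijective encoding of binary strings into nat *)
Fixpoint enc (s : seq bool) : nat :=
  match s with
  | [::] => 0
  | b :: s' => (2 * enc s' + 1 + b)%N
  end.

Definition computable1 (f : seq bool -> option (seq bool)) : Prop :=
  exists e : prog, forall p v,
    eval e (enc p) v <-> exists x, f p = Some x /\ v = enc x.

Definition computable2 (f : seq bool -> seq bool -> option (seq bool)) : Prop :=
  exists e : prog, forall p y v,
    eval e (npair (enc p) (enc y)) v <-> exists x, f p y = Some x /\ v = enc x.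

Definition universal_machine (U : seq bool -> option (seq bool)) : Prop :=
  computable1 U /\
  forall V, computable1 V -> exists c : nat, forall p x,
    V p = Some x -> exists q, U q = Some x /\ size q <= size p + c.

Definition universal_cond_machine
  (U : seq bool -> seq bool -> option (seq bool)) : Prop :=
  computable2 U /\
  forall V, computable2 V -> exists c : nat, forall p y x,
    V p y = Some x -> exists q, U q y = Some x /\ size q <= size p + c.

Definition KC (U : seq bool -> option (seq bool)) (x : seq bool) : nat :=
  epsilon (inhabits 0%N) (fun k =>
    (exists p, U p = Some x /\ size p = k) /\
    (forall p, U p = Some x -> k <= size p)).

Definition KCc (U : seq bool -> seq bool -> option (seq bool))
  (x y : seq bool) : nat :=
  epsilon (inhabits 0%N) (fun k =>
    (exists p, U p y = Some x /\ size p = k) /\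
    (forall p, U p y = Some x -> k <= size p)).

Definition d_alpha (U0 : seq bool -> option (seq bool))
  (U : seq bool -> seq bool -> option (seq bool))
  (n alpha : nat) (u : seq bool) : nat :=
  #|[set x : n.-tuple bool |
      (Z.of_nat alpha <=? Z.of_nat (KC U0 u) - Z.of_nat (KCc U u (val x)))%Z]|.

Definition log2R (x : R) : R := Rdiv (ln x) (ln (IZR 2%Z)).

(* Lower bound: let p be a shortest program for u.  Every x of length n that
   begins with the first m = alpha + O(log n) bits of p gives u a conditional
   description of length |p| - m + O(log m): a self-delimiting code of m
   followed by the rest of p.  Hence C(u | x) <= C(u) - alpha for at least
   2^(n-m) strings x.

   Upper bound: suppose 2^t strings x of length n satisfy C(u | x) <= m0,
   where m0 = C(u) - alpha.  Call y of length n heavy if 2^t strings x satisfy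
   C(y | x) <= m0.  Each x has fewer than 2^(m0+1) such y, so there are at most
   2^(n+m0+1-t) heavy strings, and they can be enumerated uniformly in
   (n, m0, t).  So u is determined by n, t and its index in that enumeration,
   whence C(u) <= n + m0 + 1 - t + O(log n), i.e. t <= n - alpha + O(log n). *)

From Stdlib Require Import Reals ZArith Lra Lia ClassicalEpsilon.
From mathcomp Require Import all_boot zify.
Set Implicit Arguments. Unset Strict Implicit. Unset Printing Implicit Defensive.

Definition pfst z := logn 2 z.+1.
Definition psnd z := (z.+1 %/ 2 ^ pfst z).-1 %/ 2.

Lemma npair_succ a b : (npair a b).+1 = 2 ^ a * (2 * b + 1).
Proof. rewrite /npair prednK // muln_gt0 expn_gt0 /=; lia. Qed.

Lemma logn2_odd a b : logn 2 (2 ^ a * (2 * b + 1)) = a.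
Proof.
rewrite lognM ?expn_gt0 //; last by lia.
rewrite pfactorK // logn_coprime ?addn0 //.
by rewrite coprime2n addn1 /= oddM.
Qed.

Lemma pfst_pair a b : pfst (npair a b) = a.
Proof. by rewrite /pfst npair_succ logn2_odd. Qed.

Lemma psnd_pair a b : psnd (npair a b) = b.
Proof.
rewrite /psnd pfst_pair npair_succ mulKn ?expn_gt0 // addn1 /=.
by rewrite mulKn.
Qed.

Lemma pair_surj z : npair (pfst z) (psnd z) = z.
Proof.
suff [a [b ->]] : exists a b, z = npair a b by rewrite pfst_pair psnd_pair.
have [m cm Hz] := pfactor_coprime (isT : prime 2) (ltn0Sn z).
have om : odd m by rewrite -coprime2n.
set a := logn 2 z.+1 in Hz *.
exists a, m./2.
apply: succn_inj; rewrite npair_succ Hz mulnC; congr (_ * _).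
rewrite -{1}(odd_double_half m) om -muln2; lia.
Qed.

Lemma npair_inj a b c d : npair a b = npair c d -> a = c /\ b = d.
Proof.
move=> E; split.
  by rewrite -(pfst_pair a b) E pfst_pair.
by rewrite -(psnd_pair a b) E psnd_pair.
Qed.

(** * Total recursive functions *)

Definition nrec (a : nat) (g : nat -> nat -> nat) (n : nat) : nat :=
  nat_rec (fun _ => nat) a g n.

Definition totrec (f : nat -> nat) := exists e, forall x, eval e x (f x).
Definition totrec2 (F : nat -> nat -> nat) := totrec (fun z => F (pfst z) (psnd z)).
Definition totrec3 (F : nat -> nat -> nat -> nat) :=
  totrec (fun z => F (pfst z) (pfst (psnd z)) (psnd (psnd z))).

Lemma totrec_ext f g : (forall x, f x = g x) -> totrec f -> totrec g.
Proof. by move=> E [e He]; exists e => x; rewrite -E. Qed.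
Lemma totrec2_ext F G : (forall x y, F x y = G x y) -> totrec2 F -> totrec2 G.
Proof. by move=> E; apply: totrec_ext => z; rewrite E. Qed.

Lemma totrec_id : totrec (fun z => z).
Proof. by exists PId => x; apply: ev_id. Qed.
Lemma totrec_succ : totrec S.
Proof. by exists PSucc => x; apply: ev_succ. Qed.
Lemma totrec_fst : totrec pfst.
Proof. by exists PFst => x; rewrite -{1}(pair_surj x); apply: ev_fst. Qed.
Lemma totrec_snd : totrec psnd.
Proof. by exists PSnd => x; rewrite -{1}(pair_surj x); apply: ev_snd. Qed.
Lemma totrec_comp f g : totrec f -> totrec g -> totrec (fun x => f (g x)).
Proof. by move=> [ef Hf] [eg Hg]; exists (PComp ef eg) => x; apply: ev_comp. Qed.
Lemma totrec_pair f g : totrec f -> totrec g -> totrec (fun x => npair (f x) (g x)).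
Proof. by move=> [ef Hf] [eg Hg]; exists (PPair ef eg) => x; apply: ev_pair. Qed.
Lemma totrec_const c : totrec (fun _ => c).
Proof.
elim: c => [|c [e He]]; first by exists PZero => x; apply: ev_zero.
by exists (PComp PSucc e) => x; apply: ev_comp (He x) (ev_succ _).
Qed.

Lemma totrec2_app F a b :
  totrec2 F -> totrec a -> totrec b -> totrec (fun x => F (a x) (b x)).
Proof.
move=> HF Ha Hb; have := totrec_comp HF (totrec_pair Ha Hb).
by apply: totrec_ext => x; rewrite pfst_pair psnd_pair.
Qed.
Lemma totrec3_app F a b c : totrec3 F -> totrec a -> totrec b -> totrec c ->
  totrec (fun x => F (a x) (b x) (c x)).
Proof.
move=> HF Ha Hb Hc; have := totrec_comp HF (totrec_pair Ha (totrec_pair Hb Hc)).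
by apply: totrec_ext => x; rewrite !pfst_pair !psnd_pair pfst_pair.
Qed.

Lemma totrec2_rec f g : totrec f -> totrec3 g -> totrec2 (fun x n => nrec (f x) (g x) n).
Proof.
move=> [ef Hf] [eg Hg]; exists (PRec ef eg) => z.
rewrite -{1}(pair_surj z); move: (pfst z) (psnd z) => x n.
elim: n => [|n IH] /=; first by apply: ev_rec0.
apply: ev_recS IH _.
have := Hg (npair x (npair n (nrec (f x) (g x) n))).
by rewrite !pfst_pair !psnd_pair pfst_pair.
Qed.

Lemma totrec_nrec a (G : nat -> nat -> nat -> nat) n :
  totrec a -> totrec (fun y => G (pfst y) (pfst (psnd y)) (psnd (psnd y))) -> totrec n ->
  totrec (fun z => nrec (a z) (G z) (n z)).
Proof. by move=> Ha HG; apply: totrec2_app (totrec2_rec Ha HG) totrec_id. Qed.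

Ltac totrec_auto :=
  cbv beta;
  match goal with
  | |- totrec (fun _ => ?c) => exact: totrec_const
  | |- totrec (fun z => z) => exact: totrec_id
  | |- totrec (fun z => nrec (@?a z) (@?G z) (@?n z)) =>
      apply: (@totrec_nrec a G n); [totrec_auto | totrec_auto | totrec_auto]
  | |- totrec (fun z => ?F (@?a z) (@?b z) (@?c z)) =>
      apply: (@totrec3_app F a b c);
      [solve [eauto with totrec] | totrec_auto | totrec_auto | totrec_auto]
  | |- totrec (fun z => ?F (@?a z) (@?b z)) =>
      apply: (@totrec2_app F a b); [solve [eauto with totrec] | totrec_auto | totrec_auto]
  | |- totrec (fun z => ?F (@?a z)) =>
      apply: (@totrec_comp F a); [solve [eauto with totrec] | totrec_auto]
  end.

Lemma totrec2_npair : totrec2 npair.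
Proof. by apply: totrec_ext totrec_id => z; rewrite pair_surj. Qed.
#[export] Hint Resolve totrec_succ totrec_fst totrec_snd totrec2_npair : totrec.

Definition ifz (a b c : nat) := if a is 0 then b else c.

Lemma totrec3_ifz : totrec3 ifz.
Proof.
pose g x n := nrec (pfst x) (fun _ _ => psnd x) n.
have Hg : totrec2 g by rewrite /totrec2 /g; totrec_auto.
have := totrec2_app Hg
  (totrec_pair (totrec_comp totrec_fst totrec_snd) (totrec_comp totrec_snd totrec_snd))
  totrec_fst.
by apply: totrec_ext => z; rewrite /g pfst_pair psnd_pair; case: (pfst z).
Qed.
#[export] Hint Resolve totrec3_ifz : totrec.

Lemma totrec_pred : totrec predn.
Proof.
have H : totrec (fun z => nrec 0 (fun i _ => i) z) by totrec_auto.
by apply: totrec_ext H => -[].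
Qed.
#[export] Hint Resolve totrec_pred : totrec.

Lemma totrec2_iter f : totrec f -> totrec2 (fun x n => iter n f x).
Proof.
move=> Hf; apply: (@totrec2_ext (fun x n => nrec x (fun _ w => f w) n)).
  by move=> x n; elim: n => //= n ->.
rewrite /totrec2; totrec_auto.
Qed.

Lemma totrec2_add : totrec2 addn.
Proof.
apply: (totrec2_ext (F := fun x n => iter n S x)); last exact: totrec2_iter totrec_succ.
by move=> x n; rewrite iter_succn addnC.
Qed.
Lemma totrec2_sub : totrec2 subn.
Proof.
apply: (totrec2_ext (F := fun x n => iter n predn x)); last exact: totrec2_iter totrec_pred.
by move=> x n; elim: n => [|n IH]; rewrite ?subn0 //= IH; lia.
Qed.
#[export] Hint Resolve totrec2_add totrec2_sub : totrec.

Lemma totrec2_mul : totrec2 muln.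
Proof.
apply: (@totrec2_ext (fun x n => nrec 0 (fun _ w => w + x) n)).
  by move=> x; elim=> [|n IH] /=; rewrite ?IH; lia.
rewrite /totrec2; totrec_auto.
Qed.
#[export] Hint Resolve totrec2_mul : totrec.

Lemma totrec_exp2 : totrec (fun n => 2 ^ n).
Proof.
have H : totrec (fun n => nrec 1 (fun _ w => w * 2) n) by totrec_auto.
by apply: totrec_ext H => n; elim: n => //= n ->; rewrite expnS mulnC.
Qed.
#[export] Hint Resolve totrec_exp2 : totrec.

Definition bsum (F : nat -> nat -> nat) x n := \sum_(i < n) F x i.

Lemma totrec2_bsum F : totrec2 F -> totrec2 (bsum F).
Proof.
move=> HF; apply: (@totrec2_ext (fun x n => nrec 0 (fun i w => w + F x i) n)).
  by move=> x; elim=> [|n IH]; rewrite /bsum ?big_ord0 // big_ord_recr /= IH.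
rewrite /totrec2; totrec_auto.
Qed.

(** * Evaluation with bounded fuel *)

(* The state of a bounded search for the least [i] with [g i = 1]: [0] while
   searching, [1] once some [g i = 0] was met first, and [i.+2] once found. *)
Definition minstep (g : nat -> nat) i s :=
  ifz s (ifz (g i) 1 (ifz (g i).-1 i.+2 0)) s.

(* [eval_fuel e x t] is [v.+1] if [e] outputs [v] on [x] within fuel [t], and
   [0] otherwise; fuel only bounds the length of the searches of [PMin]. *)
Fixpoint eval_fuel (e : prog) (x t : nat) : nat :=
  match e with
  | PZero => 1
  | PSucc => x.+2
  | PId => x.+1
  | PFst => (pfst x).+1
  | PSnd => (psnd x).+1
  | PComp f g => ifz (eval_fuel g x t) 0 (eval_fuel f (eval_fuel g x t).-1 t)
  | PPair f g => ifz (eval_fuel f x t) 0 (ifz (eval_fuel g x t) 0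
                    (npair (eval_fuel f x t).-1 (eval_fuel g x t).-1).+1)
  | PRec f g => nrec (eval_fuel f (pfst x) t)
      (fun i w => ifz w 0 (eval_fuel g (npair (pfst x) (npair i w.-1)) t)) (psnd x)
  | PMin f => ifz (nrec 0 (minstep (fun i => eval_fuel f (npair x i) t)) t) 0
               (ifz (nrec 0 (minstep (fun i => eval_fuel f (npair x i) t)) t).-1 0
                  (nrec 0 (minstep (fun i => eval_fuel f (npair x i) t)) t).-1)
  end.

Lemma totrec2_eval_fuel e : totrec2 (eval_fuel e).
Proof.
by elim: e => [|||||f IHf g IHg|f IHf g IHg|f IHf g IHg|f IHf];
  rewrite /totrec2 /= /minstep; totrec_auto.
Qed.
#[export] Hint Resolve totrec2_eval_fuel : totrec.

Lemma minsearch_running g k : nrec 0 (minstep g) k = 0 -> forall j, j < k -> 2 <= g j.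
Proof.
elim: k => [|k IH] //= H j Hj.
move: H; rewrite /minstep; case E: (nrec 0 (minstep g) k) => [|s] //=.
case Eg: (g k) => [|[|b]] //= _.
rewrite ltnS leq_eqVlt in Hj; case/orP: Hj => [/eqP->|Hj]; first by rewrite Eg.
exact: IH.
Qed.

Lemma minsearch_found_inv g k v : nrec 0 (minstep g) k = v.+2 ->
  [/\ v < k, g v = 1 & forall j, j < v -> 2 <= g j].
Proof.
elim: k => [|k IH] //= H.
move: H; rewrite /minstep; case E: (nrec 0 (minstep g) k) => [|s] /=.
  case Eg: (g k) => [|[|b]] //= [<-]; split=> //; exact: minsearch_running E.
move=> [Es]; rewrite Es in E; case: (IH E) => *; split=> //; lia.
Qed.

Lemma minsearch_found g k v : (forall j, j < v -> 2 <= g j) -> g v = 1 -> v < k ->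
  nrec 0 (minstep g) k = v.+2.
Proof.
move=> Hj Hv; elim: k => [|k IH] // Hk /=.
rewrite /minstep ltnS leq_eqVlt in Hk *.
case/orP: Hk => [/eqP Ek|Hk]; last by rewrite IH.
subst k.
have -> : nrec 0 (minstep g) v = 0.
  elim: v Hj {Hv IH} => [|v IHv] Hj //=.
  rewrite IHv; last by move=> j Hj'; apply: Hj; lia.
  by rewrite /minstep /=; have := Hj v (ltnSn v); case: (g v) => [|[|b]].
by rewrite /= Hv.
Qed.

Lemma eval_fuel_mono e t t' : t <= t' ->
  forall x v, eval_fuel e x t = v.+1 -> eval_fuel e x t' = v.+1.
Proof.
move=> Htt'.
elim: e => [|||||f IHf g IHg|f IHf g IHg|f IHf g IHg|f IHf] x v //=.
- case E: (eval_fuel g x t) => [|a] //= H.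
  by rewrite (IHg _ _ E) /=; apply: IHf.
- case E1: (eval_fuel f x t) => [|a] //=; case E2: (eval_fuel g x t) => [|b] //= H.
  by rewrite (IHf _ _ E1) (IHg _ _ E2).
- move: (psnd x) v; elim=> [|n IH] w /=; first exact: IHf.
  case E: (nrec _ _ n) => [|a] //= H.
  by rewrite (IH _ E) /=; apply: IHg.
- set g := (fun i => eval_fuel f (npair x i) t).
  case E: (nrec 0 (minstep g) t) => [|[|s]] //= [Hs]; subst s.
  case: (minsearch_found_inv E) => Hv Hgv Hj.
  rewrite (@minsearch_found _ t' v) //; last by lia.
  + move=> j Hj'; have := Hj j Hj'; rewrite /g.
    case E': (eval_fuel f (npair x j) t) => [|k] //= Hk.
    by rewrite (IHf _ _ E').
  + by apply: IHf.
Qed.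

Lemma eval_fuel_sound e : forall x t v, eval_fuel e x t = v.+1 -> eval e x v.
Proof.
elim: e => [|||||f IHf g IHg|f IHf g IHg|f IHf g IHg|f IHf] x t v /=.
- by case=> <-; apply: ev_zero.
- by case=> <-; apply: ev_succ.
- by case=> <-; apply: ev_id.
- by case=> <-; rewrite -{1}(pair_surj x); apply: ev_fst.
- by case=> <-; rewrite -{1}(pair_surj x); apply: ev_snd.
- case E: (eval_fuel g x t) => [|a] //= H.
  exact: ev_comp (IHg _ _ _ E) (IHf _ _ _ H).
- case E1: (eval_fuel f x t) => [|a] //=; case E2: (eval_fuel g x t) => [|b] //= [<-].
  exact: ev_pair (IHf _ _ _ E1) (IHg _ _ _ E2).
- have key y n w : nrec (eval_fuel f y t)
      (fun i w => ifz w 0 (eval_fuel g (npair y (npair i w.-1)) t)) n = w.+1 ->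
      eval (PRec f g) (npair y n) w.
    elim: n w => [|n IH] w /=; first by move=> H; apply: ev_rec0; apply: IHf H.
    case E: (nrec _ _ n) => [|a] //= H.
    exact: ev_recS (IH _ E) (IHg _ _ _ H).
  by move=> H; rewrite -(pair_surj x); apply: key H.
- set g := (fun i => eval_fuel f (npair x i) t).
  case E: (nrec 0 (minstep g) t) => [|[|s]] //= [Hs]; subst s.
  case: (minsearch_found_inv E) => Hv Hgv Hj.
  apply: ev_min; first exact: IHf Hgv.
  move=> m Hm; have := Hj m Hm; rewrite /g.
  case E': (eval_fuel f (npair x m) t) => [|[|k]] // _.
  by exists k; apply: IHf E'.
Qed.

Lemma uniform_fuel (Q : nat -> nat -> Prop) n :
  (forall m t t', t <= t' -> Q m t -> Q m t') ->
  (forall m, m < n -> exists t, Q m t) -> exists T, forall m, m < n -> Q m T.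
Proof.
move=> Hm; elim: n => [|n IH] H; first by exists 0.
case: IH => [m Hmn|T HT]; first by apply: H; lia.
case: (H n (ltnSn n)) => t Ht.
exists (maxn T t) => m; rewrite ltnS leq_eqVlt => /orP [/eqP->|Hmn].
  by apply: Hm Ht; apply: leq_maxr.
by apply: Hm (HT _ Hmn); apply: leq_maxl.
Qed.

Lemma inv_comp f g x v : eval (PComp f g) x v -> exists y, eval g x y /\ eval f y v.
Proof. by inversion 1; eauto. Qed.
Lemma inv_pair f g x v : eval (PPair f g) x v ->
  exists a b, [/\ eval f x a, eval g x b & v = npair a b].
Proof. by inversion 1; do 2 eexists; split; eauto. Qed.
Lemma inv_rec f g y n w : eval (PRec f g) (npair y n) w ->
  (n = 0 /\ eval f y w) \/
  (exists m u, n = m.+1 /\ eval (PRec f g) (npair y m) u /\ eval g (npair y (npair m u)) w).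
Proof.
move=> H; inversion H; subst;
  match goal with Hp : npair _ _ = npair _ _ |- _ => case: (npair_inj Hp) => ? ? end; subst.
- by left.
- by right; do 2 eexists; split; [reflexivity|split; eauto].
Qed.
Lemma inv_min f x v : eval (PMin f) x v ->
  eval f (npair x v) 0 /\ (forall m, m < v -> exists k, eval f (npair x m) k.+1).
Proof. by inversion 1. Qed.
Lemma inv_fst x v : eval PFst x v -> v = pfst x.
Proof. by inversion 1; rewrite pfst_pair. Qed.
Lemma inv_snd x v : eval PSnd x v -> v = psnd x.
Proof. by inversion 1; rewrite psnd_pair. Qed.

Definition fuel_complete e := forall x v, eval e x v -> exists t, eval_fuel e x t = v.+1.

Lemma fuel_complete_rec f g :
  fuel_complete f -> fuel_complete g -> fuel_complete (PRec f g).
Proof.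
move=> IHf IHg x v; rewrite -(pair_surj x).
elim: (psnd x) v => [|n IH] w /inv_rec [[En Hf]|[m [u [En [Hr Hg]]]]] //.
  by case: (IHf _ _ Hf) => t Ht; exists t; rewrite /= pfst_pair psnd_pair.
case: En => ?; subst m.
case: (IH _ Hr) => t1 E1; case: (IHg _ _ Hg) => t2 E2.
exists (maxn t1 t2); rewrite /= pfst_pair psnd_pair /=.
have := eval_fuel_mono (leq_maxl t1 t2) E1; rewrite /= pfst_pair psnd_pair => ->.
exact: (eval_fuel_mono (leq_maxr t1 t2) E2).
Qed.

Lemma fuel_complete_min f : fuel_complete f -> fuel_complete (PMin f).
Proof.
move=> IHf x v /inv_min [Hv Hlt].
case: (IHf _ _ Hv) => t0 E0.
have [T HT] : exists T, forall m, m < v -> exists k, eval_fuel f (npair x m) T = k.+2.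
  apply: uniform_fuel.
    by move=> m t t' Htt [k Hk]; exists k; apply: eval_fuel_mono Hk.
  move=> m Hm; case: (Hlt m Hm) => k Hk; case: (IHf _ _ Hk) => t Ht.
  by exists t, k.
exists (maxn (maxn T t0) v.+1) => /=.
rewrite (@minsearch_found _ _ v) //=.
- move=> j Hj; case: (HT j Hj) => k Hk.
  by rewrite (eval_fuel_mono _ Hk) //; apply: leq_trans (leq_maxl _ _) (leq_maxl _ _).
- by rewrite (eval_fuel_mono _ E0) //; apply: leq_trans (leq_maxr _ _) (leq_maxl _ _).
- exact: leq_maxr.
Qed.

Lemma eval_fuel_complete e : fuel_complete e.
Proof.
elim: e => [|||||f IHf g IHg|f IHf g IHg|f IHf g IHg|f IHf] x v H.
- by inversion H; exists 0.
- by inversion H; exists 0.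
- by inversion H; exists 0.
- by rewrite (inv_fst H); exists 0.
- by rewrite (inv_snd H); exists 0.
- case: (inv_comp H) => y [Hg Hf].
  case: (IHg _ _ Hg) => t1 E1; case: (IHf _ _ Hf) => t2 E2.
  exists (maxn t1 t2) => /=.
  rewrite (eval_fuel_mono (leq_maxl t1 t2) E1) /=.
  exact: (eval_fuel_mono (leq_maxr t1 t2) E2).
- case: (inv_pair H) => a [b [Hf Hg ->]].
  case: (IHf _ _ Hf) => t1 E1; case: (IHg _ _ Hg) => t2 E2.
  exists (maxn t1 t2) => /=.
  by rewrite (eval_fuel_mono (leq_maxl t1 t2) E1) (eval_fuel_mono (leq_maxr t1 t2) E2).
- exact: fuel_complete_rec H.
- exact: fuel_complete_min H.
Qed.

Lemma eval_det e x v w : eval e x v -> eval e x w -> v = w.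
Proof.
move=> /eval_fuel_complete [t1 E1] /eval_fuel_complete [t2 E2].
have := eval_fuel_mono (leq_maxl t1 t2) E1; rewrite (eval_fuel_mono (leq_maxr t1 t2) E2).
by case.
Qed.

(** * Binary strings as numbers *)

Fixpoint decf (k n : nat) : seq bool :=
  match k with
  | 0 => [::]
  | k.+1 => if n is n'.+1 then odd n' :: decf k n'./2 else [::]
  end.
Definition dec (n : nat) := decf n n.

Lemma enc_decf k n : n <= k -> enc (decf k n) = n.
Proof.
elim: k n => [|k IH] [|n] //= Hn.
rewrite IH; last by lia.
rewrite -{3}(odd_double_half n); case: (odd n) => /=; lia.
Qed.
Lemma enc_dec n : enc (dec n) = n.
Proof. exact: enc_decf. Qed.
Lemma enc_inj : injective enc.
Proof.
elim=> [|a s IH] [|b t] //=; try lia.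
move=> E; have Eab : a = b by move: E; case: a; case: b => //=; lia.
subst b; congr (_ :: _); apply: IH; lia.
Qed.
Lemma dec_enc s : dec (enc s) = s.
Proof. by apply: enc_inj; rewrite enc_dec. Qed.

Lemma enc_cat s t : enc (s ++ t) = enc s + 2 ^ size s * enc t.
Proof. by elim: s => [|b s IH] /=; rewrite ?mul1n // IH expnS; lia. Qed.

Lemma enc_range s : 2 ^ size s - 1 <= enc s < 2 ^ (size s).+1 - 1.
Proof.
elim: s => [|b s IH] //=; move: IH; rewrite !expnS.
have := expn_gt0 2 (size s); case: b => /=; lia.
Qed.

Lemma size_enc s : size s <= enc s.
Proof. elim: s => //= b s IH; lia. Qed.

Lemma size_dec_range n c : 2 ^ n - 1 <= c < 2 ^ n.+1 - 1 -> size (dec c) = n.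
Proof.
move=> Hc; have := enc_range (dec c); rewrite enc_dec => Hr.
case: (ltngtP (size (dec c)) n) => // H.
- have : 2 ^ (size (dec c)).+1 <= 2 ^ n by rewrite leq_exp2l.
  have := expn_gt0 2 n; lia.
- have : 2 ^ n.+1 <= 2 ^ (size (dec c)) by rewrite leq_exp2l.
  have := expn_gt0 2 n; lia.
Qed.

Definition ctail c := c.-1./2.
Lemma ctail_enc s : ctail (enc s) = enc (behead s).
Proof. by case: s => [|[] s] //=; rewrite /ctail /=; lia. Qed.
Definition cdrop k c := iter k ctail c.
Lemma cdrop_enc k s : cdrop k (enc s) = enc (drop k s).
Proof.
elim: k s => [|k IH] s; first by rewrite drop0.
by rewrite /cdrop iterSr ctail_enc -/(cdrop k _) IH; case: s => //=; rewrite drop_nil.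
Qed.
Definition ctake k c := c - 2 ^ k * cdrop k c.
Lemma ctake_enc k s : ctake k (enc s) = enc (take k s).
Proof.
rewrite /ctake cdrop_enc -{1}(cat_take_drop k s) enc_cat size_take.
case: (ltnP k (size s)) => H; first lia.
rewrite drop_oversize // take_oversize //=; lia.
Qed.
Definition ifpos (a : nat) := ifz a 0 1.
Definition eqnn a b := ifz (a - b) (ifz (b - a) 1 0) 0.
Lemma eqnnE a b : eqnn a b = (a == b).
Proof.
rewrite /eqnn; case: eqP => [->|H]; first by rewrite subnn.
case E1: (a - b) => [|x] //=; case E2: (b - a) => [|y] //=; lia.
Qed.

Lemma sum_lt_indicator c l (P : nat -> bool) :
  (forall j, j < c -> P j = (j < l)) -> l <= c -> \sum_(j < c) P j = l.
Proof.
elim: c l => [|c IH] l HP Hl; first by rewrite big_ord0; lia.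
rewrite big_ord_recr /= HP //.
case: (ltnP c l) => Hcl.
  have El : l = c.+1 by lia.
  subst l; rewrite (IH c) //; last by move=> j Hj; rewrite HP; lia.
  lia.
rewrite (IH l) //; first lia.
by move=> j Hj; apply: HP; lia.
Qed.

Definition oddn n := nrec 0 (fun _ w => 1 - w) n.
Lemma oddnE n : oddn n = odd n.
Proof. elim: n => //= n; rewrite /oddn /= => ->; by case: (odd n). Qed.
Lemma totrec_oddn : totrec oddn.
Proof. by rewrite /oddn; totrec_auto. Qed.
#[export] Hint Resolve totrec_oddn : totrec.

(* [n./2] is the number of odd numbers below [n]. *)
Definition halfn n := bsum (fun _ i => oddn i) 0 n.
Lemma halfnE n : halfn n = n./2.
Proof.
rewrite /halfn /bsum; elim: n => [|n IH]; first by rewrite big_ord0.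
by rewrite big_ord_recr /= IH oddnE uphalf_half addnC.
Qed.
Lemma totrec_halfn : totrec halfn.
Proof.
have H := @totrec2_bsum (fun _ i => oddn i) (ltac:(rewrite /totrec2; totrec_auto)).
rewrite /halfn; exact: (totrec2_app H (totrec_const 0) totrec_id).
Qed.
#[export] Hint Resolve totrec_halfn : totrec.

Lemma totrec_ctail : totrec ctail.
Proof.
by apply: (totrec_ext (f := fun c => halfn c.-1)) => [c|]; rewrite ?halfnE //; totrec_auto.
Qed.
#[export] Hint Resolve totrec_ctail : totrec.
Lemma totrec2_cdrop : totrec2 cdrop.
Proof.
have H := totrec2_iter totrec_ctail.
by have := totrec2_app H totrec_snd totrec_fst; apply: totrec_ext.
Qed.
#[export] Hint Resolve totrec2_cdrop : totrec.
Lemma totrec2_ctake : totrec2 ctake.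
Proof. rewrite /totrec2 /ctake; totrec_auto. Qed.
Lemma totrec2_eqnn : totrec2 eqnn.
Proof. rewrite /totrec2 /eqnn; totrec_auto. Qed.
Lemma totrec_ifpos : totrec ifpos.
Proof. rewrite /ifpos; totrec_auto. Qed.
#[export] Hint Resolve totrec2_ctake totrec2_eqnn totrec_ifpos : totrec.

Definition clen c := bsum (fun c k => ifpos (cdrop k c)) c c.
Lemma totrec_clen : totrec clen.
Proof.
have H := @totrec2_bsum (fun c k => ifpos (cdrop k c)) (ltac:(rewrite /totrec2; totrec_auto)).
exact: (totrec2_app H totrec_id totrec_id).
Qed.
#[export] Hint Resolve totrec_clen : totrec.
Lemma ifposE a : ifpos a = (a != 0). Proof. by case: a. Qed.
Lemma clen_enc s : clen (enc s) = size s.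
Proof.
rewrite /clen /bsum (eq_bigr (fun j : 'I_ _ => nat_of_bool (cdrop j (enc s) != 0))); last first.
  by move=> j _; rewrite ifposE.
apply: (@sum_lt_indicator _ _ (fun j => cdrop j (enc s) != 0)); last exact: size_enc s.
move=> j _.
rewrite cdrop_enc.
case: (ltnP j (size s)) => H.
  apply/negP => /eqP E.
  have E' : drop j s = [::] by apply: enc_inj; rewrite E.
  by move: (size_drop j s); rewrite E' /=; lia.
by rewrite drop_oversize.
Qed.

Fixpoint lead1 (s : seq bool) : nat :=
  if s is b :: s' then (if b then (lead1 s').+1 else 0) else 0.
Lemma take_ones j s : (take j.+1 s == nseq j.+1 true) = (j < lead1 s).
Proof.
elim: s j => [|b s IH] j //=.
case: b => //=; case: j => [|j] /=; first by rewrite take0.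
by rewrite eqseq_cons /= IH.
Qed.
Lemma lead1_size s : lead1 s <= size s.
Proof. elim: s => //= b s IH; case: b => //=. Qed.
Lemma enc_ones j : enc (nseq j true) = 2 ^ j.+1 - 2.
Proof. elim: j => //= j ->; rewrite !expnS; have := expn_gt0 2 j; lia. Qed.

Definition clead c := bsum (fun c j => eqnn (ctake j.+1 c) (2 ^ j.+2 - 2)) c c.
Lemma totrec_clead : totrec clead.
Proof.
have H := @totrec2_bsum (fun c j => eqnn (ctake j.+1 c) (2 ^ j.+2 - 2))
  (ltac:(rewrite /totrec2; totrec_auto)).
exact: (totrec2_app H totrec_id totrec_id).
Qed.
#[export] Hint Resolve totrec_clead : totrec.
Lemma clead_enc s : clead (enc s) = lead1 s.
Proof.
rewrite /clead /bsum (eq_bigr (fun j : 'I_ _ =>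
   nat_of_bool (take j.+1 s == nseq j.+1 true))); last first.
  move=> j _; rewrite eqnnE ctake_enc -enc_ones.
  by rewrite (inj_eq enc_inj).
apply: (@sum_lt_indicator _ _ (fun j => take j.+1 s == nseq j.+1 true)).
  by move=> j _; rewrite take_ones.
exact: leq_trans (lead1_size s) (size_enc s).
Qed.

(* A self-delimiting code of [m]. *)
Definition hdr m := nseq (size (dec m)) true ++ false :: dec m.
Definition hdr_val c := ctake (clead c) (cdrop (clead c).+1 c).
Definition hdr_rest c := cdrop (clead c + clead c).+1 c.
Lemma totrec_hdr_val : totrec hdr_val. Proof. rewrite /hdr_val; totrec_auto. Qed.
Lemma totrec_hdr_rest : totrec hdr_rest. Proof. rewrite /hdr_rest; totrec_auto. Qed.
#[export] Hint Resolve totrec_hdr_val totrec_hdr_rest : totrec.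

Lemma lead1_hdr m r : lead1 (hdr m ++ r) = size (dec m).
Proof. rewrite /hdr -catA; elim: (size (dec m)) => [|k IH] /=; [by [] | by rewrite IH]. Qed.
Lemma hdr_val_enc m r : hdr_val (enc (hdr m ++ r)) = m.
Proof.
rewrite /hdr_val clead_enc lead1_hdr cdrop_enc ctake_enc /hdr -catA.
rewrite drop_cat size_nseq ltnNge leqnSn /= subSn // subnn /=.
by rewrite drop0 take_cat ltnn subnn take0 cats0 enc_dec.
Qed.
Lemma hdr_rest_enc m r : hdr_rest (enc (hdr m ++ r)) = enc r.
Proof.
rewrite /hdr_rest clead_enc lead1_hdr cdrop_enc /hdr -catA.
rewrite drop_cat size_nseq ltnNge.
have -> : size (dec m) <= (size (dec m) + size (dec m)).+1 by lia.
rewrite /=.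
have -> : (size (dec m) + size (dec m)).+1 - size (dec m) = (size (dec m)).+1 by lia.
by rewrite /= drop_cat ltnn subnn drop0.
Qed.
Lemma size_hdr m : size (hdr m) = (size (dec m)).*2.+1.
Proof. by rewrite /hdr size_cat size_nseq /= -addnn; lia. Qed.
Lemma size_dec_log m : size (dec m) <= trunc_log 2 m.+1.
Proof.
apply: trunc_log_max => //; have := enc_range (dec m); rewrite enc_dec.
have := expn_gt0 2 (size (dec m)); lia.
Qed.

Lemma hdr_size_bound m n : 0 < n -> m < n.*2 -> size (hdr m) <= (trunc_log 2 n).*2 + 3.
Proof.
move=> Hn Hm; rewrite size_hdr.
have := size_dec_log m.
have : trunc_log 2 m.+1 <= trunc_log 2 n.*2 by apply: leq_trunc_log.
by rewrite trunc_log2_double //; lia.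
Qed.

Lemma eval_total_eq e f x v : (forall x, eval e x (f x)) -> eval e x v -> v = f x.
Proof. by move=> He H; apply: eval_det H (He x). Qed.

Definition least_search (G H : nat -> nat -> nat) (q : seq bool) : option (seq bool) :=
  match excluded_middle_informative (exists s, G (enc q) s == 0) with
  | left h => Some (dec (H (enc q) (ex_minn h)))
  | right _ => None
  end.

Lemma least_search_computable G H : totrec2 G -> totrec2 H -> computable1 (least_search G H).
Proof.
move=> [eG HG] [eH HH].
have EG c s : eval eG (npair c s) (G c s) by have := HG (npair c s); rewrite pfst_pair psnd_pair.
have EH c s : eval eH (npair c s) (H c s) by have := HH (npair c s); rewrite pfst_pair psnd_pair.
exists (PComp eH (PPair PId (PMin eG))) => p v; split.
- case/inv_comp => y [/inv_pair [a [s [Ha Hs ->]]] Hv].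
  have Ea : a = enc p by inversion Ha.
  subst a; case/inv_min: Hs => H0 Hlt.
  have G0 : G (enc p) s = 0 by rewrite (eval_total_eq HG H0) pfst_pair psnd_pair.
  rewrite /least_search; case: excluded_middle_informative => [h|[]]; last by exists s; apply/eqP.
  case: ex_minnP => m /eqP Gm Hmin.
  have Ems : m = s.
    apply/eqP; rewrite eqn_leq Hmin ?G0 //=.
    rewrite leqNgt; apply/negP => Hsm; case: (Hlt _ Hsm) => k Hk.
    by move: (eval_total_eq HG Hk); rewrite pfst_pair psnd_pair Gm.
  subst m; eexists; split; first reflexivity.
  by rewrite enc_dec (eval_total_eq HH Hv) pfst_pair psnd_pair.
- case=> x []; rewrite /least_search; case: excluded_middle_informative => // h.
  case: ex_minnP => m /eqP Gm Hmin [<-] ->; rewrite enc_dec.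
  apply: ev_comp (EH _ _).
  apply: ev_pair; first exact: ev_id.
  apply: ev_min; first by rewrite -Gm.
  move=> k Hk; exists (G (enc p) k).-1.
  have : G (enc p) k != 0 by apply/negP => /Hmin; lia.
  by case E: (G (enc p) k) => [|r] //= _; rewrite -E.
Qed.

Lemma least_search_spec G H q u (Q : nat -> Prop) :
  (forall s, G (enc q) s = 0 <-> Q s) -> (exists s, Q s) ->
  (forall s, Q s -> (forall s', s' < s -> ~ Q s') -> dec (H (enc q) s) = u) ->
  least_search G H q = Some u.
Proof.
move=> HG [s0 Hs0] HH; rewrite /least_search.
case: excluded_middle_informative => [h|[]]; last by exists s0; apply/eqP/HG.
case: ex_minnP => m /eqP Gm Hmin; congr Some; apply: HH; first exact/HG.
move=> s' Hs' /HG /eqP /Hmin; lia.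
Qed.

Lemma computable2_precomp (U0 : seq bool -> option (seq bool)) P :
  computable1 U0 -> totrec2 P ->
  computable2 (fun q x => U0 (dec (P (enc q) (enc x)))).
Proof.
move=> [e0 H0] [eP HP].
exists (PComp e0 eP) => q x v; split.
- case/inv_comp => y [Hy Hv].
  have := eval_total_eq HP Hy; rewrite pfst_pair psnd_pair => Ey; subst y.
  by apply/H0; rewrite enc_dec.
- move=> Hx; apply: ev_comp.
    by have := HP (npair (enc q) (enc x)); rewrite pfst_pair psnd_pair.
  by rewrite pfst_pair psnd_pair -[X in eval e0 X v](enc_dec (P (enc q) (enc x))); apply/H0.
Qed.

Lemma id_computable1 : computable1 (fun p => Some p).
Proof.
exists PId => p v; split; first by move=> H; inversion H; eauto.
by case=> x [[->] ->]; apply: ev_id.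
Qed.
Lemma id_computable2 : computable2 (fun p y => Some p).
Proof.
exists PFst => p y v; split; first by move/inv_fst; rewrite pfst_pair => ->; eauto.
by case=> x [[->] ->]; apply: ev_fst.
Qed.

Lemma min_exists (P : nat -> Prop) :
  (exists k, P k) -> exists k, P k /\ forall j, P j -> k <= j.
Proof.
move=> [k0 Pk0].
pose Pb k := if excluded_middle_informative (P k) then true else false.
have HPb k : Pb k = true <-> P k by rewrite /Pb; case: excluded_middle_informative.
have Hex : exists k, Pb k by exists k0; apply/HPb.
case: (ex_minnP Hex) => k /HPb Hk Hmin; exists k; split=> // j /HPb; exact: Hmin.
Qed.

Definition is_shortest_size (D : seq bool -> Prop) (k : nat) :=
  (exists p, D p /\ size p = k) /\ (forall p, D p -> k <= size p).

(* [KC] and [KCc] unfold to this definition. *)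
Definition shortest_size (D : seq bool -> Prop) : nat :=
  epsilon (inhabits 0%N) (is_shortest_size D).

Lemma shortest_sizeP (D : seq bool -> Prop) :
  (exists p, D p) -> is_shortest_size D (shortest_size D).
Proof.
move=> [p0 Hp0]; apply: epsilon_spec.
have [k [[p [Hp Hs]] Hmin]] := @min_exists (fun k => exists p, D p /\ size p = k)
  (ex_intro _ (size p0) (ex_intro _ p0 (conj Hp0 erefl))).
exists k; split; first by exists p.
by move=> q Hq; apply: Hmin; exists q.
Qed.

Lemma KC_spec U0 u : (exists p, U0 p = Some u) ->
  (exists p, U0 p = Some u /\ size p = KC U0 u) /\
  (forall p, U0 p = Some u -> KC U0 u <= size p).
Proof. exact: shortest_sizeP. Qed.

Lemma KCc_spec U u y : (exists p, U p y = Some u) ->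
  (exists p, U p y = Some u /\ size p = KCc U u y) /\
  (forall p, U p y = Some u -> KCc U u y <= size p).
Proof. exact: shortest_sizeP. Qed.

Lemma univ_some U0 u : universal_machine U0 -> exists p, U0 p = Some u.
Proof.
case=> _ /(_ _ id_computable1) [c Hc].
by case: (Hc u u erefl) => q [Hq _]; exists q.
Qed.
Lemma univc_some U u y : universal_cond_machine U -> exists p, U p y = Some u.
Proof.
case=> _ /(_ _ id_computable2) [c Hc].
by case: (Hc u y u erefl) => q [Hq _]; exists q.
Qed.

Lemma univ_bound U0 V : universal_machine U0 -> computable1 V ->
  exists c, forall p x, V p = Some x -> KC U0 x <= size p + c.
Proof.
move=> [_ HU] /HU [c Hc]; exists c => p x Hx.
case: (Hc _ _ Hx) => q [Hq Hs].
have [_ Hm] := KC_spec (ex_intro _ q Hq).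
exact: leq_trans (Hm _ Hq) Hs.
Qed.
Lemma univc_bound U V : universal_cond_machine U -> computable2 V ->
  exists c, forall p y x, V p y = Some x -> KCc U x y <= size p + c.
Proof.
move=> [_ HU] /HU [c Hc]; exists c => p y x Hx.
case: (Hc _ _ _ Hx) => q [Hq Hs].
have [_ Hm] := KCc_spec (ex_intro _ q Hq).
exact: leq_trans (Hm _ Hq) Hs.
Qed.

Lemma KC_le_size U0 : universal_machine U0 -> exists c, forall u, KC U0 u <= size u + c.
Proof. by move=> HU; case: (univ_bound HU id_computable1) => c Hc; exists c => u; apply: Hc. Qed.

(** * The lower bound *)

Definition splice c cx := ctake (hdr_val c) cx + 2 ^ (clen (ctake (hdr_val c) cx)) * hdr_rest c.

Lemma totrec2_splice : totrec2 splice.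
Proof. by rewrite /totrec2 /splice; totrec_auto. Qed.

Lemma splice_enc m r x : splice (enc (hdr m ++ r)) (enc x) = enc (take m x ++ r).
Proof. by rewrite /splice hdr_val_enc hdr_rest_enc ctake_enc clen_enc enc_cat. Qed.

Lemma KCc_prefix_splice U0 U : universal_machine U0 -> universal_cond_machine U ->
  exists c1, forall u p x m, U0 p = Some u -> m <= size p -> take m x = take m p ->
    KCc U u x <= size (hdr m) + (size p - m) + c1.
Proof.
move=> HU0 HU.
have HV := computable2_precomp (proj1 HU0) totrec2_splice.
case: (univc_bound HU HV) => c Hc; exists c => u p x m Hp Hm Hx.
have := Hc (hdr m ++ drop m p) x u.
by rewrite splice_enc dec_enc Hx cat_take_drop size_cat size_drop; apply.
Qed.

(** * Enumerating an increasing family of finite sets *)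

Lemma leq_sum_prefix (f : nat -> nat) a b : a <= b -> \sum_(i < a) f i <= \sum_(i < b) f i.
Proof.
by move=> Hab; rewrite -(subnKC Hab) big_split_ord /= leq_addr.
Qed.

Lemma sum_count (P : nat -> bool) N : \sum_(i < N) P i = count P (iota 0 N).
Proof.
elim: N => [|N IH]; first by rewrite big_ord0.
have E : iota 0 N.+1 = iota 0 N ++ [:: N] by rewrite -addn1 iotaD.
by rewrite big_ord_recr IH E count_cat /= addn0.
Qed.

(* The least [k < N] with [F a k != 0]. *)
Definition bmin (F : nat -> nat -> nat) a N :=
  bsum (fun b y => ifz (bsum F b y.+1) 1 0) a N.

Lemma totrec2_bmin F : totrec2 F -> totrec2 (fun a N => bmin F a N).
Proof.
move=> HF; have H1 := totrec2_bsum HF.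
have H2 : totrec2 (fun b y => ifz (bsum F b y.+1) 1 0) by rewrite /totrec2; totrec_auto.
exact: totrec2_bsum H2.
Qed.

Lemma bminE F a N k : k < N -> F a k != 0 -> (forall j, j < k -> F a j = 0) ->
  bmin F a N = k.
Proof.
move=> HkN Hk Hj; rewrite /bmin /bsum.
rewrite (eq_bigr (fun y : 'I_N => nat_of_bool (y < k))).
  by apply: (@sum_lt_indicator N k (fun y => y < k)) => //; lia.
move=> y _; rewrite /bsum; case: (ltnP y k) => Hy.
  by rewrite big1 // => j _; apply: Hj; have := ltn_ord j; lia.
have Hky : k < y.+1 by lia.
rewrite (bigD1 (Ordinal Hky)) //=.
by case: (F a k) Hk.
Qed.

(* [A pr s y = 1] means that [y < 2 ^ pfst pr] has been enumerated into the set
   with parameter [pr] by stage [s].  [Ap] shifts the stages so that stage [0]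
   is empty, [szA] counts the enumerated elements, [newA] flags the elements
   appearing at stage [s], and [selA A pr s j] is the [j]-th of them. *)
Definition Nn pr := 2 ^ pfst pr.
Definition Ap (A : nat -> nat -> nat -> nat) pr s y := ifz s 0 (A pr s.-1 y).
Definition szA A pr s := bsum (fun a y => Ap A (pfst a) (psnd a) y) (npair pr s) (Nn pr).
Definition newA A pr s y := Ap A pr s y * (1 - Ap A pr s.-1 y).
Definition cntnew A pr s y :=
  bsum (fun a y' => newA A (pfst a) (psnd a) y') (npair pr s) y.+1.
Definition selA A pr s j :=
  bmin (fun b y => cntnew A (pfst (pfst b)) (psnd (pfst b)) y - psnd b)
       (npair (npair pr s) j) (Nn pr).

Lemma totrec_Nn : totrec Nn. Proof. by rewrite /Nn; totrec_auto. Qed.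
#[export] Hint Resolve totrec_Nn : totrec.

Lemma totrec3_selA A : totrec3 A -> totrec3 (selA A).
Proof.
move=> HA.
have HnewA : totrec3 (newA A) by rewrite /totrec3 /newA /Ap; totrec_auto.
have Hc : totrec3 (cntnew A).
  have Hs := @totrec2_bsum (fun a y' => newA A (pfst a) (psnd a) y')
    (ltac:(rewrite /totrec2; totrec_auto)).
  by rewrite /totrec3 /cntnew; totrec_auto.
have Hb := @totrec2_bmin (fun b y => cntnew A (pfst (pfst b)) (psnd (pfst b)) y - psnd b)
  (ltac:(rewrite /totrec2; totrec_auto)).
by rewrite /totrec3 /selA; totrec_auto.
Qed.

Lemma totrec2_szA A : totrec3 A -> totrec2 (szA A).
Proof.
move=> HA.
have HAp : totrec3 (Ap A) by rewrite /totrec3 /Ap; totrec_auto.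
have Hs := @totrec2_bsum (fun a y => Ap A (pfst a) (psnd a) y)
  (ltac:(rewrite /totrec2; totrec_auto)).
by rewrite /totrec2 /szA; totrec_auto.
Qed.

Section Enumeration.
Variables (A : nat -> nat -> nat -> nat) (pr : nat).
Hypothesis A01 : forall s y, A pr s y <= 1.
Hypothesis A_mono : forall s y, A pr s y <= A pr s.+1 y.

Lemma szAE s : szA A pr s = \sum_(y < Nn pr) Ap A pr s y.
Proof. by rewrite /szA /bsum; apply: eq_bigr => y _; rewrite pfst_pair psnd_pair. Qed.

Lemma cntnewE s y : cntnew A pr s y = \sum_(y' < y.+1) newA A pr s y'.
Proof. by rewrite /cntnew /bsum; apply: eq_bigr => y' _; rewrite pfst_pair psnd_pair. Qed.

Lemma Ap01 s y : Ap A pr s y <= 1.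
Proof. by case: s => //= s; apply: A01. Qed.

Lemma Ap_mono s s' y : s <= s' -> Ap A pr s y <= Ap A pr s' y.
Proof.
elim: s' => [|s' IH] Hss; first by have -> : s = 0 by lia.
case: (ltnP s s'.+1) => H; last by have -> : s = s'.+1 by lia.
apply: leq_trans (IH _) _; first lia.
by case: s' {IH H Hss} => //= s'; apply: A_mono.
Qed.

Lemma Ap_new s y : Ap A pr s y = Ap A pr s.-1 y + newA A pr s y.
Proof.
rewrite /newA; have := Ap01 s y; have := Ap01 s.-1 y.
have := Ap_mono y (leq_pred s).
by case: (Ap A pr s y) => [|[|?]]; case: (Ap A pr s.-1 y) => [|[|?]] //=; lia.
Qed.

Lemma szA_new s : szA A pr s = szA A pr s.-1 + \sum_(y < Nn pr) newA A pr s y.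
Proof. by rewrite !szAE -big_split /=; apply: eq_bigr => y _; rewrite {1}Ap_new. Qed.

Lemma szA_mono s s' : s <= s' -> szA A pr s <= szA A pr s'.
Proof. by move=> H; rewrite !szAE; apply: leq_sum => y _; apply: Ap_mono. Qed.

Lemma szA_le_sum (B : nat -> bool) s :
  (forall s y, A pr s y = 1 -> B y) -> szA A pr s <= \sum_(y < Nn pr) B y.
Proof.
move=> HB; rewrite szAE; apply: leq_sum => y _.
case: s => //= s; have := A01 s y.
by case E: (A pr s y) => [|[|?]] //= _; rewrite (HB _ _ E).
Qed.

Lemma selA_new s u : u < Nn pr -> newA A pr s u = 1 ->
  selA A pr s (\sum_(y < u) newA A pr s y) = u.
Proof.
move=> Hu Hnew; rewrite /selA; apply: bminE => //.
  by rewrite !(pfst_pair, psnd_pair) cntnewE big_ord_recr /= Hnew; lia.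
move=> y Hy; rewrite !(pfst_pair, psnd_pair) cntnewE.
by have := @leq_sum_prefix (fun y' => newA A pr s y') y.+1 u Hy; lia.
Qed.

(* The index of [u] is the number of elements enumerated before it: those of
   earlier stages, then those of its own stage that are smaller than [u]. *)
Lemma enum_index_spec u s0 (B : nat -> bool) :
  u < Nn pr -> A pr s0 u = 1 -> (forall s y, A pr s y = 1 -> B y) ->
  exists i, i < \sum_(y < Nn pr) B y /\ (exists s, i < szA A pr s) /\
   forall s, i < szA A pr s -> (forall s', s' < s -> szA A pr s' <= i) ->
     selA A pr s (i - szA A pr s.-1) = u.
Proof.
move=> Hu Hs0 HB.
have Hex : exists s, Ap A pr s u == 1 by exists s0.+1; rewrite /Ap /= Hs0.
case: (ex_minnP Hex) => su /eqP Hsu Hmin.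
have Hprev : Ap A pr su.-1 u = 0.
  have := Ap01 su.-1 u; case E: (Ap A pr su.-1 u) => [|[|?]] //= _.
  have := Hmin _ (introT eqP E); case: su Hsu {Hmin E} => //= su _; lia.
have Hnew : newA A pr su u = 1 by have := Ap_new su u; rewrite Hsu Hprev.
pose j := \sum_(y < u) newA A pr su y.
have Hlt : szA A pr su.-1 + j < szA A pr su.
  rewrite (szA_new su) ltn_add2l /j.
  by apply: leq_trans (leq_sum_prefix _ Hu); rewrite big_ord_recr /= Hnew; lia.
exists (szA A pr su.-1 + j); split; [|split; first by exists su].
  exact: leq_trans Hlt (szA_le_sum su HB).
move=> s Hs Hsmin.
have -> : s = su.
  apply/eqP; rewrite eqn_leq; apply/andP; split.
    by rewrite leqNgt; apply/negP => /Hsmin; lia.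
  rewrite leqNgt; apply/negP => Hlt'.
  by have := szA_mono (leq_pred s); have := @szA_mono s su.-1 (ltac:(lia)); lia.
by rewrite addKn; apply: selA_new.
Qed.

End Enumeration.

(* The strings of length [n] are numbered [2 ^ n - 1], ..., [2 ^ n.+1 - 2]. *)
Definition strn n y := dec (2 ^ n - 1 + y).
Lemma enc_strn n y : enc (strn n y) = 2 ^ n - 1 + y.
Proof. exact: enc_dec. Qed.
Lemma size_strn n y : y < 2 ^ n -> size (strn n y) = n.
Proof. move=> Hy; apply: size_dec_range; rewrite expnS; have := expn_gt0 2 n; lia. Qed.
Lemma strn_inj n y1 y2 : strn n y1 = strn n y2 -> y1 = y2.
Proof. by move=> /(congr1 enc); rewrite !enc_strn; have := expn_gt0 2 n; lia. Qed.

Lemma size_lt_code p m : p < 2 ^ m.+1 - 1 -> size (dec p) <= m.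
Proof.
move=> Hp; have := enc_range (dec p); rewrite enc_dec => H.
rewrite leqNgt; apply/negP => Hs.
have : 2 ^ m.+1 <= 2 ^ size (dec p) by rewrite leq_exp2l.
lia.
Qed.
Lemma code_lt_size p m : size p <= m -> enc p < 2 ^ m.+1 - 1.
Proof.
move=> Hp; have := enc_range p => H.
have : 2 ^ (size p).+1 <= 2 ^ m.+1 by rewrite leq_exp2l.
lia.
Qed.

Lemma strn_enc n s : size s = n -> strn n (enc s - (2 ^ n - 1)) = s.
Proof.
move=> Hs; apply: enc_inj; rewrite enc_strn; have := enc_range s; rewrite Hs; lia.
Qed.
Lemma strn_lt n s : size s = n -> enc s - (2 ^ n - 1) < 2 ^ n.
Proof. move=> Hs; have := enc_range s; rewrite Hs expnS; lia. Qed.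

Lemma card_tuple_sum n (P : seq bool -> bool) :
  #|[set x : n.-tuple bool | P x]| = \sum_(y < 2 ^ n) P (strn n y).
Proof.
rewrite (sum_count (fun y => P (strn n y))) -(count_map (strn n)) -size_filter.
rewrite cardE -(size_map val).
apply: perm_size; apply: uniq_perm.
- by rewrite map_inj_uniq ?enum_uniq //; apply: val_inj.
- rewrite filter_uniq // map_inj_in_uniq ?iota_uniq //.
  by move=> y1 y2 _ _; apply: strn_inj.
- move=> s; rewrite mem_filter; apply/mapP/andP.
  + case=> x; rewrite mem_enum inE => Px ->; split=> //.
    apply/mapP; exists (enc x - (2 ^ n - 1)); first by rewrite mem_iota add0n strn_lt ?size_tuple.
    by rewrite strn_enc ?size_tuple.
  + case=> Ps /mapP [y]; rewrite mem_iota add0n => Hy Es.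
    have Hsz : size s == n by rewrite Es size_strn.
    exists (Tuple Hsz) => //.
    by rewrite mem_enum inE.
Qed.

Lemma prefix_count n (pre : seq bool) (Q : seq bool -> bool) :
  size pre <= n ->
  (forall x, size x = n -> take (size pre) x = pre -> Q x) ->
  2 ^ (n - size pre) <= \sum_(y < 2 ^ n) Q (strn n y).
Proof.
move=> Hpre HQ.
rewrite -card_tuple_sum.
pose u0 := [tuple of nseq n false].
pose f := fun w : (n - size pre).-tuple bool => (insubd u0 (pre ++ w) : n.-tuple bool).
have Hsz (w : (n - size pre).-tuple bool) : size (pre ++ val w) == n.
  change (size (pre ++ tval w) == n); rewrite size_cat size_tuple; apply/eqP; lia.
have Hf (w : (n - size pre).-tuple bool) : val (f w) = pre ++ val w by rewrite /f val_insubd Hsz.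
have finj : injective f.
  move=> w1 w2 E; apply: val_inj; have := congr1 val E; rewrite !Hf.
  by move/eqP; rewrite eqseq_cat // => /andP [_ /eqP].
have := card_imset [set: (n - size pre).-tuple bool] finj.
rewrite cardsT card_tuple card_bool => <-.
apply: subset_leq_card; apply/subsetP => x /imsetP [w _ ->].
rewrite inE; apply: HQ; first by rewrite size_tuple.
by rewrite Hf take_size_cat.
Qed.

(** * The upper bound *)

(* A stage-wise enumeration of the strings [strn n y] having at least [2 ^ t]
   strings [strn n x] with [C(strn n y | strn n x) <= m0]; [eU] is a program
   for the conditional machine.  [witness_found] detects a program of size at
   most [m0] that outputs [strn n y] on [strn n x] within fuel [s]. *)
Definition heavy_params n m0 t := npair n (npair m0 t).
Definition witness_arg n m0 t s y x := npair (npair (heavy_params n m0 t) s) (npair y x).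

Definition witness_hit eU a p :=
  eqnn (eval_fuel eU (npair p (2 ^ pfst (pfst (pfst a)) - 1 + psnd (psnd a))) (psnd (pfst a)))
       (2 ^ pfst (pfst (pfst a)) + pfst (psnd a)).
Definition witness_found eU a :=
  ifpos (bsum (witness_hit eU) a (2 ^ (pfst (psnd (pfst (pfst a)))).+1 - 1)).
Definition witness_count eU pr s y :=
  bsum (fun b x => witness_found eU (npair (pfst b) (npair (psnd b) x)))
       (npair (npair pr s) y) (Nn pr).
Definition heavy_at eU pr s y := ifz (2 ^ (psnd (psnd pr)) - witness_count eU pr s y) 1 0.

Lemma totrec3_heavy_at eU : totrec3 (heavy_at eU).
Proof.
have H1 : totrec2 (witness_hit eU) by rewrite /totrec2 /witness_hit; totrec_auto.
have H2 := totrec2_bsum H1.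
have H3 : totrec (witness_found eU) by rewrite /witness_found; totrec_auto.
have H4 := @totrec2_bsum (fun b x => witness_found eU (npair (pfst b) (npair (psnd b) x)))
   (ltac:(rewrite /totrec2; totrec_auto)).
by rewrite /totrec3 /heavy_at /witness_count; totrec_auto.
Qed.

Definition realizes2 eU (U : seq bool -> seq bool -> option (seq bool)) :=
  forall p y v, eval eU (npair (enc p) (enc y)) v <-> exists x, U p y = Some x /\ v = enc x.

Lemma witness_foundE eU n m0 t s y x :
  witness_found eU (witness_arg n m0 t s y x) =
  [exists p : 'I_(2 ^ m0.+1 - 1),
     eval_fuel eU (npair p (enc (strn n x))) s == (enc (strn n y)).+1].
Proof.
rewrite /witness_found /bsum /witness_arg /heavy_params !(pfst_pair, psnd_pair) ifposE.
rewrite sum_nat_eq0 negb_forall; congr nat_of_bool; apply: eq_existsb => p.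
rewrite /witness_hit !(pfst_pair, psnd_pair) eqnnE !enc_strn.
have -> : 2 ^ n + y = (2 ^ n - 1 + y).+1 by have := expn_gt0 2 n; lia.
by case: (eval_fuel _ _ _ == _).
Qed.

Lemma witness_found_mono eU n m0 t s s' y x : s <= s' ->
  witness_found eU (witness_arg n m0 t s y x) <= witness_found eU (witness_arg n m0 t s' y x).
Proof.
move=> Hss; rewrite !witness_foundE; case: existsP => // -[p /eqP Hp].
by case: existsP => // -[]; exists p; rewrite (eval_fuel_mono Hss Hp).
Qed.

Lemma witness_found_sound eU U n m0 t s y x : realizes2 eU U ->
  witness_found eU (witness_arg n m0 t s y x) = 1 -> KCc U (strn n y) (strn n x) <= m0.
Proof.
move=> HeU; rewrite witness_foundE; case: existsP => // -[p /eqP /eval_fuel_sound] + _.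
rewrite -[nat_of_ord p]enc_dec HeU => -[v [Hv /enc_inj Ev]]; subst v.
have [_ Hm] := KCc_spec (ex_intro _ _ Hv).
exact: leq_trans (Hm _ Hv) (size_lt_code (ltn_ord p)).
Qed.

Lemma witness_found_complete eU U n m0 t y x : realizes2 eU U -> universal_cond_machine U ->
  KCc U (strn n y) (strn n x) <= m0 ->
  exists s, forall s', s <= s' -> witness_found eU (witness_arg n m0 t s' y x) = 1.
Proof.
move=> HeU HU Hk.
have [[p [Hp Hs]] _] := KCc_spec (univc_some (strn n y) (strn n x) HU).
have /eval_fuel_complete [s Hev] : eval eU (npair (enc p) (enc (strn n x))) (enc (strn n y)).
  by apply/HeU; eauto.
exists s => s' Hss; rewrite witness_foundE; case: existsP => // -[].
have Hp' : enc p < 2 ^ m0.+1 - 1 by apply: code_lt_size; rewrite Hs.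
by exists (Ordinal Hp'); rewrite /= (eval_fuel_mono Hss Hev).
Qed.

Lemma witness_count_E eU n m0 t s y : witness_count eU (heavy_params n m0 t) s y =
  \sum_(x < 2 ^ n) witness_found eU (witness_arg n m0 t s y x).
Proof. by rewrite /witness_count /bsum /Nn /heavy_params !(pfst_pair, psnd_pair). Qed.

Lemma heavy_at_E eU n m0 t s y :
  heavy_at eU (heavy_params n m0 t) s y = (2 ^ t <= witness_count eU (heavy_params n m0 t) s y).
Proof.
rewrite /heavy_at {1}/heavy_params !(pfst_pair, psnd_pair).
by rewrite -subn_eq0; case: (2 ^ t - _).
Qed.

Lemma heavy_at01 eU pr s y : heavy_at eU pr s y <= 1.
Proof. by rewrite /heavy_at; case: (_ - _). Qed.

Lemma heavy_at_mono eU n m0 t s y :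
  heavy_at eU (heavy_params n m0 t) s y <= heavy_at eU (heavy_params n m0 t) s.+1 y.
Proof.
rewrite !heavy_at_E; case: (2 ^ t <= _) / idP => //= H.
suff -> : 2 ^ t <= witness_count eU (heavy_params n m0 t) s.+1 y by [].
apply: leq_trans H _; rewrite !witness_count_E; apply: leq_sum => x _.
exact: witness_found_mono.
Qed.

Definition nwitness U n m0 y := \sum_(x < 2 ^ n) (KCc U (strn n y) (strn n x) <= m0).

Lemma heavy_at_sound eU U n m0 t s y : realizes2 eU U ->
  heavy_at eU (heavy_params n m0 t) s y = 1 -> 2 ^ t <= nwitness U n m0 y.
Proof.
move=> HeU; rewrite heavy_at_E; case: (2 ^ t <= _) / idP => //= H _.
apply: leq_trans H _; rewrite witness_count_E /nwitness; apply: leq_sum => x _.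
have := @witness_found_sound eU U n m0 t s y x HeU.
by rewrite witness_foundE; case: existsP => //= _ ->.
Qed.

Lemma heavy_at_complete eU U n m0 t y : realizes2 eU U -> universal_cond_machine U ->
  2 ^ t <= nwitness U n m0 y -> exists s, heavy_at eU (heavy_params n m0 t) s y = 1.
Proof.
move=> HeU HU H.
have [T HT] : exists T, forall x, x < 2 ^ n ->
    KCc U (strn n y) (strn n x) <= m0 -> witness_found eU (witness_arg n m0 t T y x) = 1.
  apply: uniform_fuel.
    move=> x s s' Hss Hq /Hq; have := @witness_found_mono eU n m0 t s s' y x Hss.
    by rewrite !witness_foundE; case: existsP; case: existsP.
  move=> x _; case: (KCc U (strn n y) (strn n x) <= m0) / idP => Hk; last by exists 0.
  by case: (witness_found_complete t HeU HU Hk) => s Hs; exists s => _; apply: Hs.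
exists T; rewrite heavy_at_E; apply/eqP; rewrite eqb1.
apply: leq_trans H _; rewrite witness_count_E /nwitness; apply: leq_sum => x _.
by case: (KCc U _ _ <= m0) / idP => //= /(HT x (ltn_ord x)) ->.
Qed.

Lemma count_KCc_le U n m0 w : universal_cond_machine U ->
  \sum_(y < 2 ^ n) (KCc U (strn n y) w <= m0) <= 2 ^ m0.+1 - 1.
Proof.
move=> HU.
pose P := fun y => KCc U (strn n y) w <= m0.
rewrite (sum_count P) -size_filter.
pose f := fun y => epsilon (inhabits [::]) (fun p => U p w = Some (strn n y) /\ size p <= m0).
have Hf y : P y -> U (f y) w = Some (strn n y) /\ size (f y) <= m0.
  move=> Py; rewrite /f.
  match goal with |- context[epsilon ?i ?Q] => apply: (@epsilon_spec _ i Q) end.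
  have [[p [Hp Hs]] _] := KCc_spec (univc_some (strn n y) w HU).
  by exists p; split=> //; rewrite Hs.
rewrite -(size_map f).
rewrite -[X in _ <= X](size_iota 0 (2 ^ m0.+1 - 1)) -(size_map dec).
apply: uniq_leq_size.
  rewrite map_inj_in_uniq ?filter_uniq ?iota_uniq //.
  move=> y1 y2; rewrite !mem_filter => /andP [P1 _] /andP [P2 _] E.
  have := (Hf _ P1).1; rewrite E (Hf _ P2).1 => -[] /strn_inj ->. done.
move=> p /mapP [y]; rewrite mem_filter => /andP [Py _] ->.
apply/mapP; exists (enc (f y)); last by rewrite dec_enc.
by rewrite mem_iota add0n code_lt_size // (Hf _ Py).2.
Qed.

Lemma count_heavy_le U n m0 t : universal_cond_machine U ->
  (\sum_(y < 2 ^ n) (2 ^ t <= nwitness U n m0 y)) * 2 ^ t <= 2 ^ n * (2 ^ m0.+1 - 1).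
Proof.
move=> HU; rewrite big_distrl /=.
apply: (@leq_trans (\sum_(y < 2 ^ n) nwitness U n m0 y)).
  by apply: leq_sum => y _; case: (2 ^ t <= _) / idP => //=; rewrite mul1n.
rewrite /nwitness exchange_big /=.
apply: (@leq_trans (\sum_(x < 2 ^ n) (2 ^ m0.+1 - 1))).
  by apply: leq_sum => x _; apply: count_KCc_le.
by rewrite sum_nat_const card_ord.
Qed.

Lemma heavy_index_bound eU U n m0 t y : realizes2 eU U -> universal_cond_machine U ->
  y < 2 ^ n -> t <= n + m0 -> 2 ^ t <= nwitness U n m0 y ->
  let pr := heavy_params n m0 t in
  exists i, i < 2 ^ (n + m0 + 1 - t) /\ (exists s, i < szA (heavy_at eU) pr s) /\
   forall s, i < szA (heavy_at eU) pr s -> (forall s', s' < s -> szA (heavy_at eU) pr s' <= i) ->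
     selA (heavy_at eU) pr s (i - szA (heavy_at eU) pr s.-1) = y.
Proof.
move=> HeU HU Hy Ht HS pr.
case: (heavy_at_complete HeU HU HS) => s0 Hs0.
have HNn : Nn pr = 2 ^ n by rewrite /Nn /pr /heavy_params pfst_pair.
have [i [HiB Hi]] := @enum_index_spec (heavy_at eU) pr (@heavy_at01 eU pr)
  (@heavy_at_mono eU n m0 t) y s0 (fun y => 2 ^ t <= nwitness U n m0 y)
  (ltac:(by rewrite HNn)) Hs0 (fun s y H => heavy_at_sound HeU H).
exists i; split=> //; rewrite HNn in HiB.
have E : 2 ^ n * 2 ^ m0.+1 = 2 ^ (n + m0 + 1 - t) * 2 ^ t.
  by rewrite -!expnD; congr (2 ^ _); lia.
apply: leq_trans HiB _.
rewrite -(leq_pmul2r (expn_gt0 2 t)) -E.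
apply: leq_trans (count_heavy_le n m0 t HU) _.
by rewrite leq_mul2l leq_subr orbT.
Qed.

(* The decoder reads [hdr n ++ hdr t ++ r], where [r] is the index [i] written
   with exactly [L] bits, sets [m0 := L + t - n - 1], waits for the first stage
   [s] at which more than [i] heavy strings are enumerated, and outputs the
   [i]-th of them. *)
Definition dn c := hdr_val c.
Definition dt c := hdr_val (hdr_rest c).
Definition dib c := hdr_rest (hdr_rest c).
Definition dL c := clen (dib c).
Definition di c := dib c - (2 ^ dL c - 1).
Definition dm c := dL c + dt c - dn c - 1.
Definition dpr c := heavy_params (dn c) (dm c) (dt c).
Definition decoder_test eU c s := (di c).+1 - szA (heavy_at eU) (dpr c) s.
Definition decoder_out eU c s :=
  2 ^ dn c - 1 + selA (heavy_at eU) (dpr c) s (di c - szA (heavy_at eU) (dpr c) s.-1).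

Lemma totrec_dpr : totrec dpr.
Proof. by rewrite /dpr /heavy_params /dn /dm /dL /dt /dib; totrec_auto. Qed.
Lemma totrec_di : totrec di.
Proof. by rewrite /di /dL /dib; totrec_auto. Qed.
Lemma totrec_dn : totrec dn.
Proof. by rewrite /dn; totrec_auto. Qed.
#[export] Hint Resolve totrec_dpr totrec_di totrec_dn : totrec.

Lemma decoder_computable eU : computable1 (least_search (decoder_test eU) (decoder_out eU)).
Proof.
have HA := totrec3_heavy_at eU.
have Hsz := totrec2_szA HA; have Hsel := totrec3_selA HA.
by apply: least_search_computable; rewrite /totrec2 ?/decoder_test ?/decoder_out; totrec_auto.
Qed.

Lemma decode_params n t L i : i < 2 ^ L ->
  let c := enc (hdr n ++ hdr t ++ dec (2 ^ L - 1 + i)) in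
  [/\ dn c = n, di c = i & dpr c = heavy_params n (L + t - n - 1) t].
Proof.
move=> Hi c.
have Hs : size (dec (2 ^ L - 1 + i)) = L.
  by apply: size_dec_range; rewrite expnS; have := expn_gt0 2 L; lia.
have E1 : dn c = n by rewrite /dn /c hdr_val_enc.
have E2 : hdr_rest c = enc (hdr t ++ dec (2 ^ L - 1 + i)) by rewrite /c hdr_rest_enc.
have E3 : dt c = t by rewrite /dt E2 hdr_val_enc.
have E4 : dib c = 2 ^ L - 1 + i by rewrite /dib E2 hdr_rest_enc enc_dec.
have E5 : dL c = L by rewrite /dL E4 -{1}(enc_dec (2 ^ L - 1 + i)) clen_enc Hs.
split=> //; first by rewrite /di E4 E5; lia.
by rewrite /dpr /dm E1 E3 E5.
Qed.

Lemma decoder_heavy eU U n m0 t y : realizes2 eU U -> universal_cond_machine U ->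
  y < 2 ^ n -> t <= n + m0 -> 2 ^ t <= nwitness U n m0 y ->
  exists i, i < 2 ^ (n + m0 + 1 - t) /\
    least_search (decoder_test eU) (decoder_out eU)
      (hdr n ++ hdr t ++ dec (2 ^ (n + m0 + 1 - t) - 1 + i)) = Some (strn n y).
Proof.
move=> HeU HU Hy Ht HS.
have [i [HiL [Hex Hsel]]] := heavy_index_bound HeU HU Hy Ht HS.
exists i; split=> //.
have [Edn Edi] := decode_params n t HiL.
have -> : n + m0 + 1 - t + t - n - 1 = m0 by lia.
move=> Edpr.
apply: (least_search_spec (Q := fun s => i < szA (heavy_at eU) (heavy_params n m0 t) s)).
- by move=> s; rewrite /decoder_test Edi Edpr; lia.
- exact: Hex.
- move=> s Hs Hmin; rewrite /decoder_out Edn Edi Edpr Hsel //.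
  by move=> s' Hs'; rewrite leqNgt; apply/negP; apply: Hmin.
Qed.

Lemma KC_le_heavy_index U0 U : universal_machine U0 -> universal_cond_machine U ->
  exists c2, forall n m0 t u, size u = n -> t <= n + m0 ->
    2 ^ t <= \sum_(x < 2 ^ n) (KCc U u (strn n x) <= m0) ->
    KC U0 u <= size (hdr n) + size (hdr t) + (n + m0 + 1 - t) + c2.
Proof.
move=> HU0 HU; case: (HU) => [[eU HeU] _].
case: (univ_bound HU0 (decoder_computable eU)) => c2 Hc2.
exists c2 => n m0 t u Hsize Ht Hcnt.
have Hu := strn_enc Hsize; have Hlt := strn_lt Hsize.
have HS : 2 ^ t <= nwitness U n m0 (enc u - (2 ^ n - 1)) by rewrite /nwitness Hu.
have [i [HiL Hq]] := decoder_heavy HeU HU Hlt Ht HS.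
set L := n + m0 + 1 - t in HiL Hq *.
have HsL : size (dec (2 ^ L - 1 + i)) = L.
  by apply: size_dec_range; rewrite expnS; have := expn_gt0 2 L; lia.
rewrite Hu in Hq; have := Hc2 _ _ Hq; rewrite !size_cat HsL; lia.
Qed.

Lemma d_alpha_E U0 U n alpha u : alpha <= KC U0 u ->
  d_alpha U0 U n alpha u = \sum_(y < 2 ^ n) (KCc U u (strn n y) <= KC U0 u - alpha).
Proof.
move=> Ha; rewrite /d_alpha.
rewrite -(card_tuple_sum n (fun x => KCc U u x <= KC U0 u - alpha)).
apply: eq_card => x; rewrite !inE.
have -> : KCc U u (\val x) = KCc U u x by [].
apply/idP/idP.
- by move/ZArith.Zbool.Zle_bool_imp_le => H; apply/leP; lia.
- by move/leP => H; apply: ZArith.Zbool.Zle_imp_le_bool; lia.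
Qed.

Lemma d_alpha_lower U0 U : universal_machine U0 -> universal_cond_machine U ->
  exists c, forall n alpha u, 0 < n -> size u = n ->
    let m := alpha + (trunc_log 2 n).*2 + 3 + c in
    m <= minn n (KC U0 u) -> 2 ^ (n - m) <= d_alpha U0 U n alpha u.
Proof.
move=> HU0 HU; case: (KCc_prefix_splice HU0 HU) => c Hc.
exists c => n alpha u Hn Hu m Hm.
have [[p [Hp Hps]] _] := KC_spec (univ_some u HU0).
have Hmp : m <= size p by rewrite Hps; lia.
have Hpre : size (take m p) = m by rewrite size_takel.
rewrite d_alpha_E; last by lia.
have := @prefix_count n (take m p) (fun x => KCc U u x <= KC U0 u - alpha).
rewrite Hpre; apply; first lia.
move=> x Hx Htx.
have Hhdr : size (hdr m) <= (trunc_log 2 n).*2 + 3 by apply: hdr_size_bound => //; lia.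
by have := Hc u p x m Hp Hmp Htx; rewrite Hps; lia.
Qed.

Lemma four_mul_lt_exp2 l : 5 <= l -> 4 * l < 2 ^ l.
Proof.
elim: l => // l IH; rewrite leq_eqVlt => /orP [/eqP <- //|Hl].
by have := IH Hl; rewrite expnS; lia.
Qed.

Lemma trunc_log2_small n : 5 <= trunc_log 2 n -> 4 * trunc_log 2 n < n.
Proof.
move=> Hl; have Hn : 0 < n by case: n Hl; rewrite ?trunc_log0.
exact: leq_trans (four_mul_lt_exp2 Hl) (trunc_logP _ Hn).
Qed.

Lemma d_alpha_upper U0 U : universal_machine U0 -> universal_cond_machine U ->
  exists c, forall n alpha u, size u = n -> c <= trunc_log 2 n ->
    alpha + 5 * trunc_log 2 n <= KC U0 u ->
    d_alpha U0 U n alpha u < 2 ^ (n - alpha + 5 * trunc_log 2 n).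
Proof.
move=> HU0 HU; case: (KC_le_heavy_index HU0 HU) => c Hc.
exists (10 + c) => n alpha u Hu Hl Hk.
set l := trunc_log 2 n in Hl Hk *.
have Hln : 4 * l < n by apply: trunc_log2_small; lia.
set t := n - alpha + 5 * l.
rewrite ltnNge; apply/negP => Hdt.
have Ht : t <= n + (KC U0 u - alpha) by rewrite /t; lia.
have := Hc n (KC U0 u - alpha) t u Hu Ht; rewrite -d_alpha_E; last by lia.
move=> /(_ Hdt) Hbound.
have H1 : size (hdr n) <= l.*2 + 3 by apply: hdr_size_bound; lia.
have H2 : size (hdr t) <= l.*2 + 5.
  have := @hdr_size_bound t n.*2 (ltac:(lia)) (ltac:(rewrite /t; lia)).
  by rewrite trunc_log2_double //; lia.
lia.
Qed.

Lemma d_alpha_bounds_nat U0 U : universal_machine U0 -> universal_cond_machine U ->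
  exists L0, forall n, 2 ^ L0 <= n -> forall alpha u, size u = n ->
    alpha + 12 * trunc_log 2 n <= KC U0 u ->
    (exists j, [/\ j <= 12 * trunc_log 2 n + 1, alpha + j <= n &
                   2 ^ (n - (alpha + j)) <= d_alpha U0 U n alpha u]) /\
    d_alpha U0 U n alpha u < 2 ^ (n - alpha + 5 * trunc_log 2 n).
Proof.
move=> HU0 HU.
case: (KC_le_size HU0) => c0 Hc0.
case: (d_alpha_lower HU0 HU) => c1 Hc1.
case: (d_alpha_upper HU0 HU) => c2 Hc2.
exists (20 + c0 + c1 + c2) => n Hn alpha u Hu Hk.
set l := trunc_log 2 n in Hk *.
have Hl : 20 + c0 + c1 + c2 <= l by apply: trunc_log_max.
have Hn0 : 0 < n by apply: leq_trans Hn; rewrite expn_gt0.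
have Hku : KC U0 u <= n + c0 by rewrite -Hu; apply: Hc0.
split; last by apply: Hc2 => //; lia.
exists (l.*2 + 3 + c1); split; first lia; first lia.
by rewrite addnA !addnA; apply: Hc1 => //; lia.
Qed.

Local Open Scope R_scope.

Lemma INR_exp2 (a : nat) : INR (2 ^ a)%N = 2 ^ a.
Proof. by elim: a => [|a IH] //; rewrite expnS -multE mult_INR IH. Qed.

Lemma INR_leq (a b : nat) : (a <= b)%N -> INR a <= INR b.
Proof. by move/leP; apply: le_INR. Qed.

Lemma log2R_ge (n : nat) : (0 < n)%N -> INR (trunc_log 2 n) <= log2R (INR n).
Proof.
move=> Hn; have H2 := trunc_logP (isT : (1 < 2)%N) Hn.
have Hr : 2 ^ trunc_log 2 n <= INR n by rewrite -INR_exp2; apply: INR_leq.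
have Hpos : 0 < 2 ^ trunc_log 2 n by apply: pow_lt; lra.
have Hln : ln (2 ^ trunc_log 2 n) <= ln (INR n).
  case: (Rle_lt_or_eq_dec _ _ Hr) => H; last by rewrite H; lra.
  by apply: Rlt_le; apply: ln_increasing.
rewrite ln_pow in Hln; last lra.
have Hl2 : 0 < ln 2 by have := ln_lt_2; lra.
rewrite /log2R; apply: (Rmult_le_reg_r (ln (IZR 2))); first exact: Hl2.
rewrite /Rdiv Rmult_assoc Rinv_l; lra.
Qed.

Lemma powerRZ_sub (n a : nat) : (a <= n)%N ->
  powerRZ 2 (Z.of_nat n - Z.of_nat a) = 2 ^ (n - a)%N.
Proof. by move=> H; rewrite -Nat2Z.inj_sub -?pow_powerRZ //; apply/leP. Qed.

Lemma pow2_trunc_log_le (n k : nat) : (0 < n)%N -> 2 ^ (k * trunc_log 2 n) <= INR n ^ k.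
Proof.
move=> Hn; rewrite mulnC pow_mult.
apply: pow_incr; split; first by apply: pow_le; lra.
by rewrite -INR_exp2; apply: INR_leq; apply: trunc_logP.
Qed.

Lemma lower_bound_real (n a j : nat) : (0 < n)%N -> (a + j <= n)%N ->
  (j <= 12 * trunc_log 2 n + 1)%N ->
  / (2 * INR n ^ 12) * powerRZ 2 (Z.of_nat n - Z.of_nat a) <= 2 ^ (n - (a + j))%N.
Proof.
move=> Hn Haj Hj.
have Hpos : 0 < 2 * INR n ^ 12.
  by apply: Rmult_lt_0_compat; [lra | apply: pow_lt; apply: lt_0_INR; apply/ltP].
have H2j : 2 ^ j <= 2 * INR n ^ 12.
  apply: Rle_trans (_ : 2 ^ (12 * trunc_log 2 n + 1) <= _).
    by apply: Rle_pow; [lra | apply/leP].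
  rewrite pow_add pow_1 Rmult_comm.
  by apply: Rmult_le_compat_l; [lra | apply: pow2_trunc_log_le].
have -> : powerRZ 2 (Z.of_nat n - Z.of_nat a) = 2 ^ (n - (a + j))%N * 2 ^ j.
  by rewrite powerRZ_sub; [rewrite -pow_add; congr (2 ^ _); lia | lia].
have Hp : 0 <= 2 ^ (n - (a + j))%N by apply: pow_le; lra.
apply: (Rmult_le_reg_l (2 * INR n ^ 12)) => //.
rewrite -Rmult_assoc Rinv_r; last lra.
by rewrite Rmult_1_l [X in _ <= X]Rmult_comm; apply: Rmult_le_compat_l.
Qed.

Lemma upper_bound_real (n a : nat) : (0 < n)%N -> (a <= n)%N ->
  2 ^ (n - a + 5 * trunc_log 2 n)%N <= INR n ^ 5 * powerRZ 2 (Z.of_nat n - Z.of_nat a).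
Proof.
move=> Hn Ha; rewrite powerRZ_sub // pow_add Rmult_comm.
apply: Rmult_le_compat_r; first by apply: pow_le; lra.
exact: pow2_trunc_log_le.
Qed.

Theorem lemma1 :
  forall (U0 : seq bool -> option (seq bool))
         (U : seq bool -> seq bool -> option (seq bool)),
    universal_machine U0 -> universal_cond_machine U ->
    exists N : nat, forall n : nat, (N <= n)%nat ->
      forall (alpha : nat) (u : seq bool), size u = n ->
        (INR (KC U0 u) >= INR alpha + 12 * log2R (INR n))%R ->
        (Rinv (2 * INR n ^ 12) * powerRZ 2 (Z.of_nat n - Z.of_nat alpha)
           <= INR (d_alpha U0 U n alpha u))%R /\
        (INR (d_alpha U0 U n alpha u)
           <= INR n ^ 5 * powerRZ 2 (Z.of_nat n - Z.of_nat alpha))%R.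
Proof.
move=> U0 U HU0 HU.
case: (d_alpha_bounds_nat HU0 HU) => L0 HL0.
exists (2 ^ L0)%N => n Hn alpha u Hu Hk.
have Hn0 : (0 < n)%N by apply: leq_trans Hn; rewrite expn_gt0.
have Hk' : (alpha + 12 * trunc_log 2 n <= KC U0 u)%N.
  apply/leP/INR_le; rewrite plus_INR mult_INR.
  have := log2R_ge Hn0; rewrite [INR 12]/=; lra.
have [[j [Hj Hjn Hd1]] Hd2] := HL0 n Hn alpha u Hu Hk'.
split.
- apply: Rle_trans (lower_bound_real Hn0 Hjn Hj) _.
  by rewrite -INR_exp2; apply: INR_leq.
- apply: Rle_trans (upper_bound_real Hn0 (_ : alpha <= n)%N); last by lia.
  by rewrite -INR_exp2; apply: INR_leq; apply: ltnW.
Qed.
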